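(* Let $0<p\leqslant q:=1-p$, and let $\tilde f(z)$ and $\tilde g(z)$ be entire functions satisfying \[ \tilde{f}(z)=(1-e^{-pz})\tilde{f}(pz) +e^{-pz}\tilde{f}(qz) +\tilde{g}(z), \] with $\tilde f(0)=\tilde g(0)=0$. Then $\tilde f$ is JS-admissible if and only if $\tilde g$ is JS-admissible.
   Context: An entire function $\tilde f$ is called JS-admissible if the following two conditions hold for $|z|\geqslant1$ (for some small $\varepsilon>0$ and some $\varepsilon'\in(0,1)$): (I) there exist $\alpha,\beta\in\mathbb{R}$ such that, uniformly for $|\arg(z)|\leqslant\varepsilon$, $\tilde f(z)=O\left(|z|^\alpha(\log_+|z|)^\beta\right)$, where $\log_+x:=\log(1+x)$; (O) uniformly for $\varepsilon\leqslant|\arg(z)|\leqslant\pi$, $e^z\tilde f(z)=O\left(e^{(1-\varepsilon')|z|}\right)$. *)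

From Stdlib Require Import Reals.
From Coquelicot Require Import Coquelicot.
Open Scope R_scope.

Definition Cexp (w : C) : C :=
  (exp (fst w) * cos (snd w), exp (fst w) * sin (snd w)).

Definition entire (f : C -> C) : Prop :=
  forall z : C, @ex_derive C_AbsRing C_NormedModule f z.

(* |arg z| for z <> 0, with the principal argument arg z in (-pi, pi]:
   |arg z| = acos (Re z / |z|) in [0, pi]. *)
Definition abs_arg (z : C) : R := acos (fst z / Cmod z).

Definition log_plus (x : R) : R := ln (1 + x).

Definition JS_admissible (f : C -> C) : Prop :=
  exists (eps eps' : R), 0 < eps /\ 0 < eps' < 1 /\
    (* (I) *)
    (exists (alpha beta K : R),
       forall z : C, 1 <= Cmod z -> abs_arg z <= eps ->
         Cmod (f z) <= K * (Rpower (Cmod z) alpha * Rpower (log_plus (Cmod z)) beta)) /\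
    (* (O) *)
    (exists K : R,
       forall z : C, 1 <= Cmod z -> eps <= abs_arg z <= PI ->
         Cmod (Cexp z * f z) <= K * exp ((1 - eps') * Cmod z)).

(* Conditions (I) and (O) together amount to one global bound
   |f z| <= K (|z|^N + exp ((1 - e)|z| - Re z)): the polynomial term governs the
   sector |arg z| <= eps and the exponential term, which is (O) divided by |e^z|,
   governs its complement; inside the unit disk f is bounded anyway.  This weight
   behaves well under the dilations z |-> p z, q z of the equation, the factor
   |e^(-pz)| = e^(-p Re z) being absorbed by its exponential part.  Hence a bound
   for f passes to g = f - (1 - e^(-pz)) f(pz) - e^(-pz) f(qz) directly.
   Conversely, for N large the dilated weights contract by 3/4 once |z| is large,
   so a bound for g propagates to f by induction along the scales q^k |z|,
   starting from a bound for the continuous function f on a disk. *)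

From Stdlib Require Import Reals Lra Lia List Classical ClassicalEpsilon.
From Coquelicot Require Import Coquelicot.
Open Scope R_scope.

Lemma exp_le_exp x y : x <= y -> exp x <= exp y.
Proof. intros [Hlt | ->]; [left; now apply exp_increasing | lra]. Qed.

Lemma exp_le_one (x : R) : x <= 0 -> exp x <= 1.
Proof. intros Hx. rewrite <- exp_0. now apply exp_le_exp. Qed.

Lemma one_le_exp (x : R) : 0 <= x -> 1 <= exp x.
Proof. intros Hx. rewrite <- exp_0. now apply exp_le_exp. Qed.

Lemma exp_mult_le_exp_mult x1 x2 y1 y2 :
  x1 + x2 <= y1 + y2 -> exp x1 * exp x2 <= exp y1 * exp y2.
Proof. intros H; rewrite <- !exp_plus; now apply exp_le_exp. Qed.

Lemma exp_scale_le (s y : R) : 0 <= s <= 1 -> exp (s * y) <= 1 + exp y.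
Proof.
  intros Hs. pose proof (exp_pos y).
  destruct (Rle_or_lt 0 y).
  - assert (exp (s * y) <= exp y) by (apply exp_le_exp; nra). lra.
  - assert (exp (s * y) <= 1) by (apply exp_le_one; nra). lra.
Qed.

Lemma pow_exp_bounded (N : nat) (a : R) : 0 < a ->
  exists C, 0 <= C /\ forall r, 0 <= r -> r ^ N * exp (- (a * r)) <= C.
Proof.
  intros Ha. set (n := INR N + 1).
  assert (Hn : 0 < n) by (pose proof (pos_INR N); unfold n; lra).
  assert (Hna : 0 < n / a) by (apply Rdiv_lt_0_compat; lra).
  exists ((n / a) ^ N). split; [apply pow_le; lra|].
  intros r Hr. set (t := a * r / n).
  assert (Ht : 0 <= t) by (apply Rmult_le_pos; [nra | apply Rlt_le, Rinv_0_lt_compat; lra]).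
  assert (Hr_t : r = n / a * t) by (unfold t; field; lra).
  assert (Hpow : t ^ N <= exp t ^ N).
  { apply pow_incr. pose proof (exp_ineq1_le t). lra. }
  assert (Hexp : exp t ^ N * exp (- (a * r)) <= 1).
  { rewrite <- (Rpower_pow N (exp t)) by apply exp_pos.
    unfold Rpower. rewrite ln_exp, <- exp_plus.
    apply exp_le_one. pose proof (pos_INR N).
    replace (a * r) with (n * t) by (unfold t; field; lra). unfold n. nra. }
  rewrite Hr_t, Rpow_mult_distr, Rmult_assoc, <- Hr_t.
  rewrite <- (Rmult_1_r ((n / a) ^ N)) at 2.
  apply Rmult_le_compat_l; [apply pow_le; lra|].
  eapply Rle_trans; [|exact Hexp].
  apply Rmult_le_compat_r; [apply Rlt_le, exp_pos | exact Hpow].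
Qed.

Lemma pow_exp_eventually_le (N : nat) (a b : R) : 0 < a -> 0 < b ->
  Rbar_locally p_infty (fun r => r ^ N * exp (- (a * r)) <= b).
Proof.
  intros Ha Hb.
  destruct (pow_exp_bounded N (a / 2)) as [C [HC0 HC]]; [lra|].
  exists (Rmax 0 (2 / a * ln ((C + 1) / b))). intros r Hr.
  pose proof (Rmax_l 0 (2 / a * ln ((C + 1) / b))).
  pose proof (Rmax_r 0 (2 / a * ln ((C + 1) / b))).
  assert (Hrb : ln ((C + 1) / b) <= a / 2 * r).
  { assert (2 / a * ln ((C + 1) / b) <= r) by lra.
    apply Rmult_le_reg_l with (2 / a); [apply Rdiv_lt_0_compat; lra|].
    replace (2 / a * (a / 2 * r)) with r by (field; lra). lra. }
  (* [r^N e^{-ar} = (r^N e^{-ar/2}) e^{-ar/2} <= C e^{-ar/2} <= C b / (C + 1)] *)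
  assert (Hsmall : exp (- (a / 2 * r)) <= b / (C + 1)).
  { rewrite <- (exp_ln (b / (C + 1))) by (apply Rdiv_lt_0_compat; lra).
    apply exp_le_exp.
    replace (ln (b / (C + 1))) with (- ln ((C + 1) / b)); [lra|].
    rewrite <- ln_Rinv by (apply Rdiv_lt_0_compat; lra). f_equal. field; lra. }
  replace (r ^ N * exp (- (a * r))) with (r ^ N * exp (- (a / 2 * r)) * exp (- (a / 2 * r)))
    by (rewrite Rmult_assoc, <- exp_plus; f_equal; f_equal; lra).
  apply Rle_trans with (C * (b / (C + 1))).
  - apply Rmult_le_compat; [| apply Rlt_le, exp_pos | apply HC; lra | exact Hsmall].
    apply Rmult_le_pos; [apply pow_le; lra | apply Rlt_le, exp_pos].
  - apply Rmult_le_reg_r with (C + 1); [lra|].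
    replace (C * (b / (C + 1)) * (C + 1)) with (C * b) by (field; lra). nra.
Qed.

Lemma pow_le_one (x : R) (n : nat) : 0 <= x <= 1 -> x ^ n <= 1.
Proof. intros Hx. rewrite <- (pow1 n). now apply pow_incr. Qed.

Lemma Cmod_bounds_Re (z : C) : - Cmod z <= fst z <= Cmod z.
Proof. apply Rabs_le_between, re_le_Cmod. Qed.

Lemma Cmod_RtoC_mul (s : R) (z : C) : 0 <= s -> Cmod (RtoC s * z) = s * Cmod z.
Proof. intros Hs. now rewrite Cmod_mult, Cmod_R, Rabs_pos_eq. Qed.

Lemma fst_RtoC_mul (s : R) (z : C) : fst (RtoC s * z)%C = s * fst z.
Proof. destruct z; simpl; ring. Qed.

Lemma Cmod_Cexp (w : C) : Cmod (Cexp w) = exp (fst w).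
Proof.
  unfold Cexp, Cmod; cbn [fst snd].
  replace ((exp (fst w) * cos (snd w)) ^ 2 + (exp (fst w) * sin (snd w)) ^ 2)
    with (exp (fst w) * exp (fst w)).
  - apply sqrt_square, Rlt_le, exp_pos.
  - rewrite <- (Rmult_1_r (exp (fst w) * exp (fst w))) at 1.
    rewrite <- (sin2_cos2 (snd w)). unfold Rsqr. ring.
Qed.

Lemma Cmod_le_Rabs_add (z : C) : Cmod z <= Rabs (fst z) + Rabs (snd z).
Proof.
  destruct z as [a b]; cbn [fst snd].
  replace (a, b) with (RtoC a + RtoC b * Ci)%C
    by (apply injective_projections; simpl; ring).
  eapply Rle_trans; [apply Cmod_triangle|].
  rewrite Cmod_mult, !Cmod_R, Cmod_Ci, Rmult_1_r. apply Rle_refl.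
Qed.

(** * Weights *)

Definition weight (N : nat) (e : R) (z : C) : R :=
  Cmod z ^ N + exp ((1 - e) * Cmod z - fst z).

Definition weight_bounded (f : C -> C) : Prop :=
  exists (N : nat) (e K : R), 0 < e < 1 /\ 0 <= K /\
    forall z, Cmod (f z) <= K * weight N e z.

Lemma weight_pos (N : nat) (e : R) (z : C) : 0 < weight N e z.
Proof.
  unfold weight. pose proof (exp_pos ((1 - e) * Cmod z - fst z)).
  assert (0 <= Cmod z ^ N) by (apply pow_le, Cmod_ge_0). lra.
Qed.

Lemma weight_scale (N : nat) (e s : R) (z : C) : 0 <= s ->
  weight N e (RtoC s * z) = s ^ N * Cmod z ^ N + exp (s * ((1 - e) * Cmod z - fst z)).
Proof.
  intros Hs. unfold weight.
  rewrite Cmod_RtoC_mul, fst_RtoC_mul, Rpow_mult_distr by exact Hs.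
  f_equal; f_equal; ring.
Qed.

Lemma exp_neg_Cmod_le_weight (N : nat) (e : R) (z : C) : e <= 1 ->
  exp (- Cmod z) <= weight N e z.
Proof.
  intros He. unfold weight.
  pose proof (Cmod_ge_0 z). pose proof (Cmod_bounds_Re z).
  assert (0 <= Cmod z ^ N) by (apply pow_le; lra).
  assert (exp (- Cmod z) <= exp ((1 - e) * Cmod z - fst z)) by (apply exp_le_exp; nra).
  lra.
Qed.

Lemma one_le_3_weight (N : nat) (e : R) (z : C) : e <= 1 -> 1 <= 3 * weight N e z.
Proof.
  intros He. pose proof (exp_neg_Cmod_le_weight N e z He).
  destruct (Rle_or_lt 1 (Cmod z)) as [Hz | Hz].
  - assert (1 <= Cmod z ^ N) by now apply pow_R1_Rle.
    pose proof (exp_pos ((1 - e) * Cmod z - fst z)). unfold weight in *. lra.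
  - assert (/ exp 1 <= exp (- Cmod z)) by (rewrite <- exp_Ropp; apply exp_le_exp; lra).
    assert (1 <= 3 * / exp 1).
    { pose proof exp_le_3. pose proof (exp_pos 1).
      apply Rmult_le_reg_r with (exp 1); [lra|].
      rewrite Rmult_assoc, Rinv_l by lra. lra. }
    lra.
Qed.

Lemma weight_le_exponent (N M : nat) (e : R) (z : C) :
  (N <= M)%nat -> 1 <= Cmod z -> weight N e z <= weight M e z.
Proof.
  intros HNM Hz. unfold weight.
  apply Rplus_le_compat_r. now apply Rle_pow.
Qed.

Lemma list_upper_bound {A : Type} (h : A -> R) (l : list A) :
  exists B, forall t, In t l -> h t <= B.
Proof.
  induction l as [|a l [B HB]].
  - exists 0. intros t [].
  - exists (Rmax (h a) B). intros t [<- | Ht].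
    + apply Rmax_l.
    + eapply Rle_trans; [apply HB, Ht | apply Rmax_r].
Qed.

Lemma continuous_Cmod_locally_le (f : C -> C) (t : C) :
  @continuous (AbsRing_UniformSpace C_AbsRing) C_NormedModule f t ->
  exists d : posreal, forall z, Cmod (z - t) < d -> Cmod (f z) <= Cmod (f t) + 1.
Proof.
  intros Hf.
  apply (filterlim_locally_ball_norm (K := C_AbsRing))
    with (eps := mkposreal 1 Rlt_0_1) in Hf.
  destruct Hf as [d Hd]. exists d. intros z Hz.
  assert (Hft : Cmod (f z - f t) < 1) by exact (Hd z Hz).
  replace (f z) with (f t + (f z - f t))%C by ring.
  eapply Rle_trans; [apply Cmod_triangle | lra].
Qed.

Lemma entire_bounded_on_disk (f : C -> C) (rho : R) : entire f ->
  exists B, forall z, Cmod z <= rho -> Cmod (f z) <= B.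
Proof.
  intros Hf.
  assert (Hloc : forall t : C, exists d : posreal,
             forall z, Cmod (z - t) < d -> Cmod (f z) <= Cmod (f t) + 1)
    by (intros t; apply continuous_Cmod_locally_le, ex_derive_continuous, Hf).
  destruct (choice _ Hloc) as [d Hd].
  set (pt := fun u : Compactness.Tn 2 R => (fst u, fst (snd u)) : C).
  apply NNPP; intros Hno.
  apply (compactness_list 2 (- rho, (- rho, tt)) (rho, (rho, tt))
           (fun u => pos_div_2 (d (pt u)))).
  intros [l Hl]. apply Hno.
  destruct (list_upper_bound (fun u => Cmod (f (pt u)) + 1) l) as [B HB].
  exists B. intros z Hz.
  assert (Hbox : Rabs (fst z) <= rho /\ Rabs (snd z) <= rho).
  { pose proof (Rmax_Cmod z).
    pose proof (Rmax_l (Rabs (fst z)) (Rabs (snd z))).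
    pose proof (Rmax_r (Rabs (fst z)) (Rabs (snd z))). lra. }
  destruct Hbox as [H1 H2]. apply Rabs_le_between in H1, H2.
  destruct (Hl (fst z, (snd z, tt))) as [[u1 [u2 []]] [Hin [_ Hclose]]];
    [simpl; tauto|].
  simpl in Hclose. destruct Hclose as [Hc1 [Hc2 _]].
  eapply Rle_trans; [apply Hd | exact (HB _ Hin)].
  eapply Rle_lt_trans; [apply Cmod_le_Rabs_add|].
  destruct z as [z1 z2]. simpl in *. unfold Rminus in *. lra.
Qed.

Lemma entire_weight_bounded_on_disk (f : C -> C) (N : nat) (e rho : R) :
  entire f -> e <= 1 ->
  exists B, 0 <= B /\ forall z, Cmod z <= rho -> Cmod (f z) <= B * weight N e z.
Proof.
  intros Hf He. destruct (entire_bounded_on_disk f rho Hf) as [B HB].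
  exists (Rabs B * exp rho). split.
  { apply Rmult_le_pos; [apply Rabs_pos | apply Rlt_le, exp_pos]. }
  intros z Hz.
  apply Rle_trans with (Rabs B * exp rho * exp (- Cmod z)).
  - rewrite Rmult_assoc, <- exp_plus.
    assert (1 <= exp (rho + - Cmod z)) by (apply one_le_exp; lra).
    pose proof (Rabs_pos B). pose proof (Rle_abs B). specialize (HB z Hz). nra.
  - apply Rmult_le_compat_l; [|now apply exp_neg_Cmod_le_weight].
    apply Rmult_le_pos; [apply Rabs_pos | apply Rlt_le, exp_pos].
Qed.

(** * JS-admissibility as a weighted bound *)

Lemma log_plus_pos (r : R) : 0 < r -> 0 < log_plus r.
Proof. intros Hr. unfold log_plus. rewrite <- ln_1. apply ln_increasing; lra. Qed.

Lemma Rpower_log_plus_le_pow (alpha beta : R) :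
  exists (N : nat) (c : R), 0 <= c /\
    forall r, 1 <= r -> Rpower r alpha * Rpower (log_plus r) beta <= c * r ^ N.
Proof.
  set (k := Rabs (ln (ln 2))).
  destruct (INR_archimed 1 (alpha + Rabs beta)) as [N HN]; [lra|].
  exists N, (exp (Rabs beta * k)). split; [apply Rlt_le, exp_pos|].
  intros r Hr.
  (* [ln 2 <= log_plus r <= r], so [beta * ln (log_plus r) <= |beta| (k + ln r)] *)
  assert (Hln : 0 <= ln r) by (rewrite <- ln_1; apply ln_le; lra).
  assert (HL : ln (ln 2) <= ln (log_plus r) <= ln r).
  { assert (Hl2 : 0 < ln 2) by (rewrite <- ln_1; apply ln_increasing; lra).
    split; apply ln_le; unfold log_plus.
    - exact Hl2.
    - apply ln_le; lra.
    - apply log_plus_pos; lra.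
    - rewrite <- (ln_exp r) at 2. apply ln_le; [lra|].
      pose proof (exp_ineq1_le r). lra. }
  assert (Hk : - k <= ln (ln 2)) by apply (Rabs_le_between (ln (ln 2)) k), Rle_refl.
  assert (Hbeta : beta * ln (log_plus r) <= Rabs beta * k + Rabs beta * ln r).
  { destruct (Rle_or_lt 0 beta).
    - rewrite Rabs_pos_eq by lra. assert (0 <= k) by apply Rabs_pos. nra.
    - rewrite Rabs_left by lra. assert (0 <= k) by apply Rabs_pos. nra. }
  rewrite <- (Rpower_pow N r) by lra. unfold Rpower.
  rewrite <- !exp_plus. apply exp_le_exp. nra.
Qed.

Lemma acos_le_reg (a b : R) :
  -1 <= a <= 1 -> -1 <= b <= 1 -> acos a <= acos b -> b <= a.
Proof.
  intros Ha Hb Hab. rewrite <- (cos_acos a Ha), <- (cos_acos b Hb).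
  pose proof (acos_bound a). pose proof (acos_bound b).
  destruct Hab as [Hlt | ->]; [left; apply cos_decreasing_1; lra | lra].
Qed.

Lemma Re_div_Cmod_bounds (z : C) : 0 < Cmod z -> -1 <= fst z / Cmod z <= 1.
Proof.
  intros Hz. pose proof (Cmod_bounds_Re z).
  assert (Hid : fst z / Cmod z * Cmod z = fst z) by (field; lra).
  split; apply Rmult_le_reg_r with (Cmod z); rewrite ?Hid; lra.
Qed.

Lemma abs_arg_le_acos (z : C) (c : R) : 0 < Cmod z -> -1 <= c <= 1 ->
  abs_arg z <= acos c -> c * Cmod z <= fst z.
Proof.
  intros Hz Hc Harg.
  apply acos_le_reg in Harg; [|now apply Re_div_Cmod_bounds | exact Hc].
  apply Rmult_le_compat_r with (r := Cmod z) in Harg; [|lra].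
  replace (fst z / Cmod z * Cmod z) with (fst z) in Harg by (field; lra). exact Harg.
Qed.

Lemma acos_le_abs_arg (z : C) (c : R) : 0 < Cmod z -> -1 <= c <= 1 ->
  acos c <= abs_arg z -> fst z <= c * Cmod z.
Proof.
  intros Hz Hc Harg.
  apply acos_le_reg in Harg; [|exact Hc | now apply Re_div_Cmod_bounds].
  apply Rmult_le_compat_r with (r := Cmod z) in Harg; [|lra].
  replace (fst z / Cmod z * Cmod z) with (fst z) in Harg by (field; lra). exact Harg.
Qed.

Lemma Cmod_le_of_Cexp_mul_le (f : C -> C) (z : C) (K a : R) :
  Cmod (Cexp z * f z) <= K * exp a -> Cmod (f z) <= K * exp (a - fst z).
Proof.
  rewrite Cmod_mult, Cmod_Cexp. intros H.
  apply Rmult_le_reg_l with (exp (fst z)); [apply exp_pos|].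
  unfold Rminus. rewrite exp_plus, exp_Ropp.
  replace (exp (fst z) * (K * (exp a * / exp (fst z)))) with (K * exp a)
    by (field; apply Rgt_not_eq, exp_pos).
  exact H.
Qed.

Lemma JS_admissible_weight_bounded (f : C -> C) :
  entire f -> JS_admissible f -> weight_bounded f.
Proof.
  intros Hf [eps [e [Heps [He [[alpha [beta [K1 HI]]] [K2 HO]]]]]].
  destruct (Rpower_log_plus_le_pow alpha beta) as [N [c [Hc Hpow]]].
  destruct (entire_weight_bounded_on_disk f N e 1 Hf) as [B [HB0 HB]]; [lra|].
  pose proof (Rabs_pos K1). pose proof (Rabs_pos K2).
  assert (HK : 0 <= Rabs K1 * c + Rabs K2) by nra.
  exists N, e, (Rabs K1 * c + Rabs K2 + B). do 2 (split; [lra|]).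
  intros z. pose proof (weight_pos N e z) as Hw.
  destruct (Rle_or_lt (Cmod z) 1) as [Hsmall | Hbig].
  { eapply Rle_trans; [apply HB, Hsmall|]. nra. }
  assert (Hsector : Cmod (f z) <= (Rabs K1 * c + Rabs K2) * weight N e z).
  { unfold weight in *. set (P := Cmod z ^ N) in *.
    set (E := exp ((1 - e) * Cmod z - fst z)) in *.
    assert (HE : 0 < E) by apply exp_pos.
    assert (HP : 0 <= P) by (apply pow_le, Cmod_ge_0).
    assert (Hexpand : (Rabs K1 * c + Rabs K2) * (P + E)
                      = Rabs K1 * c * P + Rabs K1 * c * E + Rabs K2 * P + Rabs K2 * E) by ring.
    assert (0 <= Rabs K1 * c) by nra.
    assert (0 <= Rabs K1 * c * E) by nra.
    assert (0 <= Rabs K2 * P) by nra.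
    destruct (Rle_or_lt (abs_arg z) eps) as [Harg | Harg].
    - assert (Hrp : 0 <= Rpower (Cmod z) alpha * Rpower (log_plus (Cmod z)) beta)
        by (apply Rmult_le_pos; apply Rlt_le, exp_pos).
      specialize (HI z ltac:(lra) Harg). specialize (Hpow (Cmod z) ltac:(lra)).
      assert (Cmod (f z) <= Rabs K1 * (c * P)).
      { eapply Rle_trans; [exact HI|].
        eapply Rle_trans; [apply Rmult_le_compat_r; [exact Hrp | apply Rle_abs]|].
        apply Rmult_le_compat_l; [lra | exact Hpow]. }
      nra.
    - specialize (HO z ltac:(lra) (conj (Rlt_le _ _ Harg) (proj2 (acos_bound _)))).
      apply Cmod_le_of_Cexp_mul_le in HO.
      assert (Cmod (f z) <= Rabs K2 * E).
      { eapply Rle_trans; [exact HO|].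
        apply Rmult_le_compat_r; [lra | apply Rle_abs]. }
      nra. }
  nra.
Qed.

Lemma weight_le_pow_in_sector (N : nat) (e : R) (z : C) :
  1 <= Cmod z -> (1 - e) * Cmod z <= fst z -> weight N e z <= 2 * Cmod z ^ N.
Proof.
  intros Hz Hx. unfold weight.
  assert (exp ((1 - e) * Cmod z - fst z) <= 1) by (apply exp_le_one; lra).
  assert (1 <= Cmod z ^ N) by now apply pow_R1_Rle.
  lra.
Qed.

Lemma exp_mul_weight_le (N : nat) (e c : R) (z : C) :
  (forall r, 0 <= r -> r ^ N * exp (- (e / 2 * r)) <= c) ->
  0 < e -> fst z <= (1 - e) * Cmod z ->
  exp (fst z) * weight N e z <= (c + 1) * exp ((1 - e / 2) * Cmod z).
Proof.
  intros HC He Hx. unfold weight. pose proof (Cmod_ge_0 z).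
  rewrite Rmult_plus_distr_l, <- exp_plus, Rplus_minus.
  (* [r^N e^x <= r^N e^{-(e/2) r} e^{(1-e/2) r} <= c e^{(1-e/2) r}] *)
  assert (Hpoly : exp (fst z) * Cmod z ^ N <= c * exp ((1 - e / 2) * Cmod z)).
  { apply Rle_trans with (Cmod z ^ N * exp (- (e / 2 * Cmod z)) * exp ((1 - e / 2) * Cmod z)).
    - rewrite Rmult_assoc, <- exp_plus, Rmult_comm.
      apply Rmult_le_compat_l; [apply pow_le; lra|]. apply exp_le_exp. lra.
    - apply Rmult_le_compat_r; [apply Rlt_le, exp_pos | apply HC; lra]. }
  assert (exp ((1 - e) * Cmod z) <= exp ((1 - e / 2) * Cmod z)) by (apply exp_le_exp; nra).
  lra.
Qed.

Lemma weight_bounded_JS_admissible (f : C -> C) : weight_bounded f -> JS_admissible f.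
Proof.
  intros [N [e [K [He [HK Hf]]]]].
  destruct (pow_exp_bounded N (e / 2)) as [c [Hc0 Hc]]; [lra|].
  exists (acos (1 - e)), (e / 2).
  split; [apply acos_bound_lt; lra|]. split; [lra|]. split.
  - exists (INR N), 0, (2 * K). intros z Hz Harg.
    rewrite Rpower_pow, Rpower_O, Rmult_1_r by (try apply log_plus_pos; lra).
    eapply Rle_trans; [apply Hf|].
    replace (2 * K * Cmod z ^ N) with (K * (2 * Cmod z ^ N)) by ring.
    apply Rmult_le_compat_l; [exact HK|].
    apply weight_le_pow_in_sector; [exact Hz|].
    apply abs_arg_le_acos; [lra | lra | exact Harg].
  - exists (K * (c + 1)). intros z Hz [Harg _].
    rewrite Cmod_mult, Cmod_Cexp.
    apply Rle_trans with (K * (exp (fst z) * weight N e z)).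
    + rewrite <- Rmult_assoc, (Rmult_comm K), Rmult_assoc.
      apply Rmult_le_compat_l; [apply Rlt_le, exp_pos | apply Hf].
    + rewrite Rmult_assoc. apply Rmult_le_compat_l; [exact HK|].
      apply exp_mul_weight_le; [exact Hc | lra|].
      apply acos_le_abs_arg; [lra | lra | exact Harg].
Qed.

(** * Dilation estimates *)

Section Dilation.

Variables p e : R.
Hypotheses (Hp : 0 < p) (Hpq : p <= 1 - p) (He : 0 < e < 1).

Lemma damped_exp_scale_le (s r x : R) : 0 <= s <= 1 - p -> x <= (1 - e) * r ->
  exp (- (p * x)) * exp (s * ((1 - e) * r - x))
  <= exp ((1 - e) * r - x) * exp (- (p * (1 - e) * r)).
Proof.
  intros Hs Hx. apply exp_mult_le_exp_mult.
  assert (0 <= (1 - p - s) * ((1 - e) * r - x)) by (apply Rmult_le_pos; lra).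
  nra.
Qed.

Lemma damping_le (r x : R) : x <= 0 ->
  exp (- (p * x)) <= exp ((1 - e) * r - x) * exp (- ((1 - e) * r)).
Proof. intros Hx. rewrite <- exp_plus. apply exp_le_exp. nra. Qed.

Lemma exp_scale_le_split (s y Y0 : R) : 0 <= s <= 1 - p -> 0 <= Y0 ->
  exp (s * y) <= exp y * exp (- (p * Y0)) + exp Y0.
Proof.
  intros Hs HY0. pose proof (exp_pos Y0). pose proof (exp_pos y). pose proof (exp_pos (- (p * Y0))).
  destruct (Rle_or_lt Y0 y).
  - assert (exp (s * y) <= exp y * exp (- (p * Y0))) by (rewrite <- exp_plus; apply exp_le_exp; nra).
    nra.
  - assert (exp (s * y) <= exp Y0) by (apply exp_le_exp; destruct (Rle_or_lt 0 y); nra).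
    nra.
Qed.

Lemma damped_exp_scale_le_one_add (s r x : R) : 0 <= s <= 1 - p -> 0 <= r ->
  exp (- (p * x)) * exp (s * ((1 - e) * r - x)) <= 1 + exp ((1 - e) * r - x).
Proof.
  intros Hs Hr.
  destruct (Rle_or_lt x ((1 - e) * r)) as [Hx | Hx].
  - eapply Rle_trans; [now apply damped_exp_scale_le|].
    assert (0 <= p * (1 - e) * r) by (repeat apply Rmult_le_pos; lra).
    assert (exp (- (p * (1 - e) * r)) <= 1) by (apply exp_le_one; lra).
    pose proof (exp_pos ((1 - e) * r - x)). nra.
  - assert (0 <= (1 - e) * r) by (apply Rmult_le_pos; lra).
    assert (exp (- (p * x)) <= 1) by (apply exp_le_one; nra).
    assert (exp (s * ((1 - e) * r - x)) <= 1) by (apply exp_le_one; nra).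
    pose proof (exp_pos (- (p * x))). pose proof (exp_pos ((1 - e) * r - x)). nra.
Qed.

Lemma weight_dilation_le (N : nat) : exists c, 0 <= c /\ forall z,
  (1 + exp (- (p * fst z))) * weight N e (RtoC p * z)
  + exp (- (p * fst z)) * weight N e (RtoC (1 - p) * z) <= c * weight N e z.
Proof.
  destruct (pow_exp_bounded N (1 - e)) as [C [HC0 HC]]; [lra|].
  exists (12 + 2 * C). split; [lra|]. intros z.
  pose proof (one_le_3_weight N e z ltac:(lra)) as H1.
  rewrite !weight_scale by lra. unfold weight in *.
  pose proof (Cmod_ge_0 z) as Hr. pose proof (Cmod_bounds_Re z) as Hx.
  set (r := Cmod z) in *. set (x := fst z) in *.
  assert (Hup := damped_exp_scale_le_one_add p r x ltac:(lra) Hr).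
  assert (Huq := damped_exp_scale_le_one_add (1 - p) r x ltac:(lra) Hr).
  assert (Hep := exp_scale_le p ((1 - e) * r - x) ltac:(lra)).
  set (y := (1 - e) * r - x) in *. set (u := exp (- (p * x))) in *.
  set (P := r ^ N) in *. set (E := exp y) in *.
  assert (Hu : 0 < u) by apply exp_pos. assert (HE : 0 < E) by apply exp_pos.
  assert (HP : 0 <= P) by (apply pow_le; lra).
  assert (HuP : u * P <= P + C * E).
  { destruct (Rle_or_lt 0 x).
    - assert (u <= 1) by (apply exp_le_one; nra). nra.
    - (* [u <= E e^{-(1-e) r}] and [P e^{-(1-e) r} <= C] *)
      assert (u <= E * exp (- ((1 - e) * r))) by (apply damping_le; lra).
      specialize (HC r Hr). fold P in HC.
      assert (u * P <= E * (P * exp (- ((1 - e) * r)))) by nra.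
      assert (E * (P * exp (- ((1 - e) * r))) <= E * C) by (apply Rmult_le_compat_l; lra).
      nra. }
  assert (HpP : p ^ N * P <= P) by (pose proof (pow_le_one p N ltac:(lra)); nra).
  assert (HqP : (1 - p) ^ N * P <= P) by (pose proof (pow_le_one (1 - p) N ltac:(lra)); nra).
  pose proof (exp_pos (p * y)). pose proof (exp_pos ((1 - p) * y)).
  assert (HCE : C * E <= C * (P + E)) by (apply Rmult_le_compat_l; lra).
  apply Rle_trans with ((1 + u) * (P + exp (p * y)) + u * (P + exp ((1 - p) * y))).
  { apply Rplus_le_compat; apply Rmult_le_compat_l; lra. }
  nra.
Qed.

Lemma dilation_contraction (M : nat) (Y0 r x : R) :
  (1 <= M)%nat -> 6 * (1 - p) ^ M <= 1 ->
  0 <= Y0 -> exp (- (p * Y0)) <= 1 / 6 ->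
  1 <= r -> 12 * exp Y0 <= r -> - r <= x <= r ->
  exp (- (p * (1 - e) * r)) <= 1 / 8 -> r ^ M * exp (- ((1 - e) * r)) <= 1 / 24 ->
  (1 + exp (- (p * x))) * (p ^ M * r ^ M + exp (p * ((1 - e) * r - x)))
  + exp (- (p * x)) * ((1 - p) ^ M * r ^ M + exp ((1 - p) * ((1 - e) * r - x)))
  <= 3 / 4 * (r ^ M + exp ((1 - e) * r - x)).
Proof.
  intros HM Hq HY0 HpY0 Hr1 HrY0 Hx Hdecay Hpoly.
  assert (Hdp := damped_exp_scale_le p r x ltac:(lra)).
  assert (Hdq := damped_exp_scale_le (1 - p) r x ltac:(lra)).
  assert (Hdamp := damping_le r x).
  assert (Hsp := exp_scale_le_split p ((1 - e) * r - x) Y0 ltac:(lra) HY0).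
  assert (Hsq := exp_scale_le_split (1 - p) ((1 - e) * r - x) Y0 ltac:(lra) HY0).
  set (y := (1 - e) * r - x) in *. set (u := exp (- (p * x))) in *.
  set (P := r ^ M) in *. set (E := exp y) in *.
  assert (HrP : r <= P) by (unfold P; rewrite <- (pow_1 r) at 1; now apply Rle_pow).
  assert (HpM : 0 <= p ^ M <= (1 - p) ^ M) by (split; [apply pow_le | apply pow_incr]; lra).
  assert (HqM : (1 - p) ^ M <= 1) by (apply pow_le_one; lra).
  pose proof (exp_pos (p * y)). pose proof (exp_pos ((1 - p) * y)).
  assert (Hu : 0 < u) by apply exp_pos. assert (HE : 0 < E) by apply exp_pos.
  destruct (Rle_or_lt 0 x) as [Hx0 | Hx0].
  - (* [u <= 1]: the dilated polynomial terms shrink by [2 p^M + q^M <= 1/2] *)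
    assert (Hu1 : u <= 1) by (apply exp_le_one; nra).
    assert (HEY : E * exp (- (p * Y0)) <= E * (1 / 6)) by (apply Rmult_le_compat_l; lra).
    apply Rle_trans with (2 * (p ^ M * P + exp (p * y)) + ((1 - p) ^ M * P + exp ((1 - p) * y))).
    { assert (0 <= p ^ M * P) by (apply Rmult_le_pos; lra).
      assert (0 <= (1 - p) ^ M * P) by (apply Rmult_le_pos; lra).
      apply Rplus_le_compat; nra. }
    assert ((2 * p ^ M + (1 - p) ^ M) * P <= 1 / 2 * P) by (apply Rmult_le_compat_r; lra).
    lra.
  - (* [u >= 1] but [u] is dominated by [E e^{-(1-e) r}] *)
    assert (Hu1 : 1 <= u) by (apply one_le_exp; nra).
    specialize (Hdamp ltac:(lra)).
    assert (HuP : u * P <= E / 24).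
    { assert (u * P <= E * (P * exp (- ((1 - e) * r)))) by nra. nra. }
    assert (Hup : u * exp (p * y) <= E / 8) by nra.
    assert (Huq : u * exp ((1 - p) * y) <= E / 8) by nra.
    apply Rle_trans with (2 * u * (p ^ M * P + exp (p * y)) + u * ((1 - p) ^ M * P + exp ((1 - p) * y))).
    { apply Rplus_le_compat_r, Rmult_le_compat_r; nra. }
    assert (0 <= u * P) by (apply Rmult_le_pos; lra).
    assert (p ^ M * (u * P) <= u * P) by nra.
    assert ((1 - p) ^ M * (u * P) <= u * P) by nra.
    nra.
Qed.

Lemma weight_dilation_contraction (M : nat) : (1 <= M)%nat -> 6 * (1 - p) ^ M <= 1 ->
  exists R0, 1 <= R0 /\ forall z, R0 < Cmod z ->
    (1 + exp (- (p * fst z))) * weight M e (RtoC p * z)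
    + exp (- (p * fst z)) * weight M e (RtoC (1 - p) * z) <= 3 / 4 * weight M e z.
Proof.
  intros HM Hq.
  set (Y0 := ln 6 / p).
  assert (Hln6 : 0 < ln 6) by (rewrite <- ln_1; apply ln_increasing; lra).
  assert (HY0 : 0 <= Y0) by (apply Rlt_le, Rdiv_lt_0_compat; lra).
  assert (HpY0 : exp (- (p * Y0)) <= 1 / 6).
  { replace (- (p * Y0)) with (- ln 6) by (unfold Y0; field; lra).
    rewrite exp_Ropp, exp_ln by lra. lra. }
  assert (Hbig : Rbar_locally p_infty (fun r => 12 * exp Y0 <= r)).
  { exists (12 * exp Y0). intros r Hr. lra. }
  assert (Hdecay := pow_exp_eventually_le 0 (p * (1 - e)) (1 / 8)
                      ltac:(apply Rmult_lt_0_compat; lra) ltac:(lra)).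
  assert (Hpoly := pow_exp_eventually_le M (1 - e) (1 / 24) ltac:(lra) ltac:(lra)).
  destruct (filter_and _ _ Hbig (filter_and _ _ Hdecay Hpoly)) as [R1 HR1].
  exists (Rmax 1 R1). split; [apply Rmax_l|]. intros z Hz.
  pose proof (Rmax_l 1 R1). pose proof (Rmax_r 1 R1).
  destruct (HR1 (Cmod z) ltac:(lra)) as [H12 [H8 H24]].
  rewrite pow_O, Rmult_1_l in H8.
  rewrite !weight_scale by lra. unfold weight.
  apply (dilation_contraction M Y0); try assumption; try lra.
  apply Cmod_bounds_Re.
Qed.

End Dilation.

(** * The functional equation *)

Lemma radial_induction {T : Type} (size : T -> R) (q R0 : R) (P : T -> Prop) :
  0 <= q < 1 -> 0 < R0 ->
  (forall z, size z <= R0 -> P z) ->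
  (forall z, R0 < size z -> (forall w, size w <= q * size z -> P w) -> P z) ->
  forall z, P z.
Proof.
  intros Hq HR0 Hbase Hstep.
  assert (Hind : forall (k : nat) z, q ^ k * size z <= R0 -> P z).
  { induction k as [|k IH]; intros z Hz.
    - apply Hbase. simpl in Hz. lra.
    - destruct (Rle_or_lt (size z) R0) as [Hsmall | Hbig]; [now apply Hbase|].
      apply (Hstep z Hbig). intros w Hw. apply IH.
      assert (0 <= q ^ k) by (apply pow_le; lra).
      simpl in Hz. nra. }
  intros z. destruct (Rle_or_lt (size z) R0) as [Hsmall | Hbig]; [now apply Hbase|].
  destruct (pow_lt_1_zero q ltac:(rewrite Rabs_pos_eq; lra) (R0 / size z))
    as [k Hk]; [apply Rdiv_lt_0_compat; lra|].
  apply (Hind k). specialize (Hk k (le_n k)).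
  rewrite Rabs_pos_eq in Hk by (apply pow_le; lra).
  apply Rmult_le_reg_r with (/ size z); [apply Rinv_0_lt_compat; lra|].
  rewrite Rmult_assoc, Rinv_r by lra. unfold Rdiv in Hk. lra.
Qed.

Section Functional_equation.

Variables (p : R) (f g : C -> C).
Hypotheses (Hp : 0 < p) (Hpq : p <= 1 - p).
Hypothesis Heq : forall z : C,
  f z = ((1 - Cexp (- (RtoC p * z))) * f (RtoC p * z)
         + Cexp (- (RtoC p * z)) * f (RtoC (1 - p) * z) + g z)%C.

Lemma Cmod_Cexp_dilation (z : C) : Cmod (Cexp (- (RtoC p * z))) = exp (- (p * fst z)).
Proof. rewrite Cmod_Cexp. destruct z; simpl. f_equal. ring. Qed.

Lemma Cmod_one_sub_Cexp_le (z : C) :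
  Cmod (1 - Cexp (- (RtoC p * z))) <= 1 + exp (- (p * fst z)).
Proof.
  eapply Rle_trans; [apply Cmod_triangle|].
  rewrite Cmod_opp, Cmod_1, Cmod_Cexp_dilation. lra.
Qed.

Lemma solution_Cmod_le (z : C) :
  Cmod (f z) <= (1 + exp (- (p * fst z))) * Cmod (f (RtoC p * z))
                + exp (- (p * fst z)) * Cmod (f (RtoC (1 - p) * z)) + Cmod (g z).
Proof.
  rewrite Heq.
  eapply Rle_trans; [apply Cmod_triangle|]. apply Rplus_le_compat_r.
  eapply Rle_trans; [apply Cmod_triangle|].
  rewrite !Cmod_mult, Cmod_Cexp_dilation. apply Rplus_le_compat_r.
  apply Rmult_le_compat_r; [apply Cmod_ge_0 | apply Cmod_one_sub_Cexp_le].
Qed.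

Lemma inhomogeneity_Cmod_le (z : C) :
  Cmod (g z) <= Cmod (f z) + (1 + exp (- (p * fst z))) * Cmod (f (RtoC p * z))
                + exp (- (p * fst z)) * Cmod (f (RtoC (1 - p) * z)).
Proof.
  replace (g z) with (f z + - ((1 - Cexp (- (RtoC p * z))) * f (RtoC p * z))
                      + - (Cexp (- (RtoC p * z)) * f (RtoC (1 - p) * z)))%C
    by (rewrite Heq; ring).
  eapply Rle_trans; [apply Cmod_triangle|]. rewrite Cmod_opp.
  eapply Rle_trans; [apply Rplus_le_compat_r, Cmod_triangle|]. rewrite Cmod_opp.
  rewrite !Cmod_mult, Cmod_Cexp_dilation.
  apply Rplus_le_compat_r, Rplus_le_compat_l.
  apply Rmult_le_compat_r; [apply Cmod_ge_0 | apply Cmod_one_sub_Cexp_le].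
Qed.

Lemma weight_bounded_inhomogeneity : weight_bounded f -> weight_bounded g.
Proof.
  intros [N [e [A [He [HA Hf]]]]].
  destruct (weight_dilation_le p e Hp Hpq He N) as [c [Hc Hdil]].
  exists N, e, (A * (1 + c)). do 2 (split; [auto; nra|]).
  intros z. eapply Rle_trans; [apply inhomogeneity_Cmod_le|].
  set (u := exp (- (p * fst z))). assert (Hu : 0 < u) by apply exp_pos.
  assert (Hfp : (1 + u) * Cmod (f (RtoC p * z)) <= (1 + u) * (A * weight N e (RtoC p * z)))
    by (apply Rmult_le_compat_l; [lra | apply Hf]).
  assert (Hfq : u * Cmod (f (RtoC (1 - p) * z)) <= u * (A * weight N e (RtoC (1 - p) * z)))
    by (apply Rmult_le_compat_l; [lra | apply Hf]).
  assert (Hdil_A : A * ((1 + u) * weight N e (RtoC p * z) + u * weight N e (RtoC (1 - p) * z))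
                   <= A * (c * weight N e z)) by (apply Rmult_le_compat_l; [lra | apply Hdil]).
  specialize (Hf z). lra.
Qed.

Lemma weight_bounded_solution : entire f -> weight_bounded g -> weight_bounded f.
Proof.
  intros Hf [N [e [K [He [HK Hg]]]]].
  destruct (pow_lt_1_zero (1 - p) ltac:(rewrite Rabs_pos_eq; lra) (1 / 6))
    as [M0 HM0]; [lra|].
  set (M := Nat.max (Nat.max M0 N) 1).
  assert (HqM : 6 * (1 - p) ^ M <= 1).
  { specialize (HM0 M ltac:(unfold M; lia)).
    rewrite Rabs_pos_eq in HM0 by (apply pow_le; lra). lra. }
  destruct (weight_dilation_contraction p e Hp Hpq He M ltac:(unfold M; lia) HqM)
    as [R0 [HR0 Hcontr]].
  destruct (entire_weight_bounded_on_disk f M e R0 Hf ltac:(lra)) as [B [HB0 HB]].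
  set (A := Rmax (4 * K) B).
  assert (HKA : 4 * K <= A) by apply Rmax_l. assert (HBA : B <= A) by apply Rmax_r.
  exists M, e, A. do 2 (split; [auto; lra|]).
  apply (radial_induction Cmod (1 - p) R0); [lra | lra | |].
  - intros z Hz. eapply Rle_trans; [now apply HB|].
    apply Rmult_le_compat_r; [apply Rlt_le, weight_pos | exact HBA].
  - intros z Hz IH.
    (* the recursion contracts the weight by [3/4]; the forcing term costs at most [A/4] *)
    assert (Hfp := IH (RtoC p * z)%C ltac:(rewrite Cmod_RtoC_mul; nra)).
    assert (Hfq := IH (RtoC (1 - p) * z)%C ltac:(rewrite Cmod_RtoC_mul; nra)).
    assert (HgM : Cmod (g z) <= A / 4 * weight M e z).
    { eapply Rle_trans; [apply Hg|].
      apply Rmult_le_compat; [lra | apply Rlt_le, weight_pos | lra |].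
      apply weight_le_exponent; [unfold M; lia | lra]. }
    specialize (Hcontr z Hz). pose proof (solution_Cmod_le z) as Hrec.
    set (u := exp (- (p * fst z))) in *. assert (Hu : 0 < u) by apply exp_pos.
    assert (Hfp' : (1 + u) * Cmod (f (RtoC p * z)) <= (1 + u) * (A * weight M e (RtoC p * z)))
      by (apply Rmult_le_compat_l; [lra | exact Hfp]).
    assert (Hfq' : u * Cmod (f (RtoC (1 - p) * z)) <= u * (A * weight M e (RtoC (1 - p) * z)))
      by (apply Rmult_le_compat_l; [lra | exact Hfq]).
    assert (Hcontr_A : A * ((1 + u) * weight M e (RtoC p * z) + u * weight M e (RtoC (1 - p) * z))
                       <= A * (3 / 4 * weight M e z)) by (apply Rmult_le_compat_l; [lra | exact Hcontr]).
    lra.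
Qed.

End Functional_equation.

Theorem mainTheorem10 (p : R) (f g : C -> C) :
  0 < p -> p <= 1 - p ->
  entire f -> entire g ->
  (forall z : C,
     f z = ((1 - Cexp (- (RtoC p * z))) * f (RtoC p * z)
            + Cexp (- (RtoC p * z)) * f (RtoC (1 - p) * z) + g z)%C) ->
  f 0%C = 0%C -> g 0%C = 0%C ->
  (JS_admissible f <-> JS_admissible g).
Proof.
  intros Hp Hpq Hf Hg Heq _ _. split; intros Hadm.
  - apply weight_bounded_JS_admissible, (weight_bounded_inhomogeneity p f g Hp Hpq Heq).
    now apply JS_admissible_weight_bounded.
  - apply weight_bounded_JS_admissible, (weight_bounded_solution p f g Hp Hpq Heq Hf).
    now apply JS_admissible_weight_bounded.
Qed.
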